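(* Let $S$ be $\mathbb{R}$ or $\mathbb{C}$, and let $\boldsymbol{\varepsilon}=(\varepsilon_1,\dots,\varepsilon_{n-1})$, $\boldsymbol{\delta}=(\delta_1,\dots,\delta_{n-1})$ satisfy $-1<\delta_i\le0\le\varepsilon_i$ for $i=1,\dots,n-1$. Then for every $A\in\mathbf{CP}^{\boldsymbol{\varepsilon}}_n(S)$ there exists $B\in\mathbf{CP}^{\boldsymbol{\delta}}_n(S)$ such that $b^{(k)}_{n,n}=a^{(k)}_{n,n}$ for all $k=1,\dots,n$, and for all $k$ and all $i,j\ge k$, $$\big|b^{(k)}_{i,j}-a^{(k)}_{i,j}\big|\le \max_{\min\{i,j\}\le \ell\le n-1}\left( \frac{\Big[\big(\frac{1+\varepsilon_\ell}{1+\delta_\ell}\big)^2-1\Big]\,|a^{(\ell)}_{\ell,\ell}|}{\prod_{p=\min\{i,j\}}^{\ell-1}(1+\delta_p)} + \sum_{m=\min\{i,j\}}^{\ell-1}\frac{(\varepsilon_m-\delta_m)\,|a^{(m)}_{m,m}|}{\prod_{p=\min\{i,j\}}^{m}(1+\delta_p)}\right).$$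
   Context: For an $n\times n$ complex matrix $A=(a_{i,j})$, Gaussian elimination without pivoting is the recursion $a^{(1)}_{i,j}=a_{i,j}$ and $a^{(k+1)}_{i,j}=a^{(k)}_{i,j}-a^{(k)}_{i,k}a^{(k)}_{k,j}/a^{(k)}_{k,k}$ for $k+1\le i,j\le n$, $k=1,\dots,n-1$ (defined when all pivots $a^{(k)}_{k,k}\ne0$); similarly $b^{(k)}_{i,j}$ for $B$. For $S\subseteq\mathbb{C}$ and $\boldsymbol{\varepsilon}=(\varepsilon_1,\dots,\varepsilon_{n-1})$ with each $\varepsilon_i>-1$, $\mathbf{CP}^{\boldsymbol{\varepsilon}}_n(S)$ is the set of invertible $A\in S^{n\times n}$ for which elimination without pivoting is defined and $|a^{(k)}_{i,j}|\le(1+\varepsilon_k)|a^{(k)}_{k,k}|$ for all $k=1,\dots,n-1$ and all $i,j\ge k$ with $(i,j)\ne(k,k)$. Empty products equal $1$ and empty sums equal $0$. *)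

From mathcomp Require Import all_boot all_order all_algebra.
From mathcomp Require Import complex.
From mathcomp Require Import all_reals.
Set Implicit Arguments. Unset Strict Implicit. Unset Printing Implicit Defensive.
Import Order.TTheory GRing.Theory Num.Theory.
Local Open Scope ring_scope.

Section GE.
Variables (C : numFieldType) (n : nat).

(* 1-based entry access: aent A i j = a_{i,j} for 1 <= i,j <= n (0 outside). *)
Definition aent (A : 'M[C]_n) (i j : nat) : C :=
  match (insub i.-1 : option 'I_n), (insub j.-1 : option 'I_n) with
  | Some i', Some j' => if (0 < i)%N && (0 < j)%N then A i' j' else 0
  | _, _ => 0
  end.

(* gel A k i j = a^{(k)}_{i,j} (1-based k, i, j), Gaussian elimination without
   pivoting:  a^{(1)} = A,
   a^{(k+1)}_{i,j} = a^{(k)}_{i,j} - a^{(k)}_{i,k} a^{(k)}_{k,j} / a^{(k)}_{k,k}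
   for k+1 <= i,j, and entries with i <= k or j <= k are left unchanged
   (they are never used). gel A 0 = gel A 1 = A. *)
Fixpoint gel (A : 'M[C]_n) (k : nat) : nat -> nat -> C :=
  match k with
  | 0 => aent A
  | k'.+1 =>
      let b := gel A k' in
      fun i j => if [&& (0 < k')%N, (k' < i)%N & (k' < j)%N]
                 then b i j - b i k' * b k' j / b k' k'
                 else b i j
  end.

(* CP^eps_n(S): eps is indexed 1..n-1 (values outside are irrelevant). *)
Definition CP (eps : nat -> C) (S : pred C) (A : 'M[C]_n) : Prop :=
  [/\ forall i j, A i j \in S,
      A \in unitmx,
      forall k, (1 <= k <= n.-1)%N -> gel A k k k != 0 &
      forall k i j, (1 <= k <= n.-1)%N -> (k <= i <= n)%N -> (k <= j <= n)%N ->
        (i, j) != (k, k) ->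
        `|gel A k i j| <= (1 + eps k) * `|gel A k k k| ].

Definition ge_bound (eps delta : nat -> C) (A : 'M[C]_n) (i j : nat) : C :=
  let m0 := minn i j in
  \big[Num.max/0]_(m0 <= l < n)
    ( ((((1 + eps l) / (1 + delta l)) ^+ 2 - 1) * `|gel A l l l|)
        / (\prod_(m0 <= p < l) (1 + delta p))
      + \sum_(m0 <= m < l)
          ((eps m - delta m) * `|gel A m m m|)
            / (\prod_(m0 <= p < m.+1) (1 + delta p)) ).

End GE.

Definition Sdom (C : numClosedFieldType) (isR : bool) : pred C :=
  fun x => if isR then x \is Num.real else true.

From mathcomp Require Import all_boot all_order all_algebra.
From mathcomp Require Import complex.
From mathcomp Require Import all_reals.
From mathcomp Require Import zify ring.
Set Implicit Arguments. Unset Strict Implicit. Unset Printing Implicit Defensive.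
Import Order.TTheory GRing.Theory Num.Theory.
Local Open Scope ring_scope.

(* Proof by induction on the size n.  One step of elimination on A is the
   Schur complement schur A of the (1,1) pivot a11 (gel_schur), which is CP
   for the shifted parameters (CP_schur).  The induction hypothesis gives a
   companion BS of schur A; we return the bordered matrix ext whose first row
   and column are those of A scaled by c, whose pivot is c^2 a11 and whose
   Schur complement is BS, where c^2 |a11| = |a11| + T 1 and T m denotes the
   bound of ge_bound started at index m (bound).  Steps >= 2 of ext are steps
   of BS; step 1 is checked directly using the scalar inequalities of section
   Ratio and the recursion T 2 + (eps_1 - delta_1)|a11| <= (1 + delta_1) T 1
   (bound_rec). *)

Section BigMax.
Variable C : numDomainType.
Implicit Types (F : nat -> C) (a b : nat).

Lemma bigmax_nat_le a b F X : 0 <= X -> (forall l, (a <= l < b)%N -> F l <= X) ->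
  \big[Num.max/0]_(a <= l < b) F l <= X.
Proof. by move=> X0 FX; rewrite big_nat_cond; apply: bigmax_le => // l /andP[/FX]. Qed.

Lemma bigmax_nat_ge0 a b F : (forall l, (a <= l < b)%N -> 0 <= F l) ->
  0 <= \big[Num.max/0]_(a <= l < b) F l.
Proof.
move=> F0; rewrite big_nat_cond; apply: (big_ind (fun x => 0 <= x)) => //.
  by move=> x y x0 y0; rewrite /Order.max; case: ifP.
by move=> l /andP[/F0].
Qed.

Lemma le_bigmax_seq (r : seq nat) F l : {in r, forall k, F k \is Num.real} ->
  l \in r -> F l <= \big[Num.max/0]_(k <- r) F k.
Proof.
elim: r => // x r IH Freal; rewrite in_cons big_cons.
have Fx : F x \is Num.real by apply: Freal; rewrite mem_head.
have Fr : {in r, forall k, F k \is Num.real}.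
  by move=> k kr; apply: Freal; rewrite in_cons kr orbT.
have maxr : \big[Num.max/0]_(k <- r) F k \is Num.real.
  by rewrite big_seq; apply: bigmax_real.
rewrite comparable_le_max ?real_comparable //.
by case/orP=> [/eqP->|/IH ->]; rewrite ?lexx ?orbT.
Qed.

Lemma le_bigmax_nat a b F l : (forall k, (a <= k < b)%N -> F k \is Num.real) ->
  (a <= l < b)%N -> F l <= \big[Num.max/0]_(a <= k < b) F k.
Proof.
move=> Freal al; apply: le_bigmax_seq; last by rewrite mem_index_iota.
by move=> k; rewrite mem_index_iota => /Freal.
Qed.
End BigMax.

Section Ratio.
Variables (C : numFieldType) (e d : C).
Hypotheses (d_gtN1 : -1 < d) (d_le0 : d <= 0) (e_ge0 : 0 <= e).

Lemma shift_delta_gt0 : 0 < 1 + d.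
Proof. by rewrite -ltrBlDl sub0r. Qed.

Lemma shift_delta_le1 : 1 + d <= 1.
Proof. by rewrite gerDl. Qed.

Lemma ratio_ge : 1 + e <= (1 + e) / (1 + d).
Proof.
rewrite ler_pdivlMr ?shift_delta_gt0 //.
by apply: ler_piMr; [rewrite addr_ge0 | exact: shift_delta_le1].
Qed.

Lemma ratio_ge1 : 1 <= (1 + e) / (1 + d).
Proof. by apply: le_trans ratio_ge; rewrite lerDl. Qed.

Lemma ratio_sqrB1_ge0 : 0 <= ((1 + e) / (1 + d)) ^+ 2 - 1.
Proof. by rewrite subr_ge0 expr_ge1 // ?ratio_ge1 // (le_trans ler01 ratio_ge1). Qed.

(* The scalar inequality behind the recursion of the bound: the gap e - d is
   dominated by (1 + d) ((1 + e)^2 / (1 + d)^2 - 1). *)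
Lemma gap_le_ratio : e - d <= (1 + d) * (((1 + e) / (1 + d)) ^+ 2 - 1).
Proof.
have d1_gt0 := shift_delta_gt0.
have -> : (1 + d) * (((1 + e) / (1 + d)) ^+ 2 - 1) =
          (e - d) + (1 + e) * ((1 + e) / (1 + d) - 1).
  by field; rewrite gt_eqF.
by rewrite lerDl mulr_ge0 ?subr_ge0 ?ratio_ge1 // addr_ge0.
Qed.
End Ratio.

Section Bound.
Variables (C : numFieldType) (eps delta g : nat -> C) (N : nat).
Hypothesis eps_delta : forall k, (1 <= k <= N.-1)%N ->
  -1 < delta k /\ delta k <= 0 /\ 0 <= eps k.

(* The l-th candidate of the bound started at index m0, where g l plays the
   role of the pivot a^{(l)}_{l,l}; ge_bound is the maximum over l of these. *)
Definition bound_term (m0 l : nat) : C :=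
  ((((1 + eps l) / (1 + delta l)) ^+ 2 - 1) * `|g l|)
        / (\prod_(m0 <= p < l) (1 + delta p))
      + \sum_(m0 <= m < l)
          ((eps m - delta m) * `|g m|)
            / (\prod_(m0 <= p < m.+1) (1 + delta p)).

Definition bound (m0 : nat) : C := \big[Num.max/0]_(m0 <= l < N) bound_term m0 l.

Lemma bound_term_step m0 l : (m0 < l)%N ->
  bound_term m0 l =
    (bound_term m0.+1 l + (eps m0 - delta m0) * `|g m0|) / (1 + delta m0).
Proof.
move=> m0l; rewrite /bound_term [\prod_(m0 <= p < l) _]big_ltn //.
rewrite [\sum_(m0 <= m < l) _]big_ltn // big_nat1.
have -> : \sum_(m0.+1 <= m < l) (eps m - delta m) * `|g m|
                                 / \prod_(m0 <= p < m.+1) (1 + delta p)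
   = (\sum_(m0.+1 <= m < l) (eps m - delta m) * `|g m|
        / \prod_(m0.+1 <= p < m.+1) (1 + delta p)) / (1 + delta m0).
  rewrite big_distrl /=; apply: eq_big_nat => m /andP[m0m _].
  by rewrite (@big_ltn _ _ _ m0) 1?ltnW // invfM !mulrA mulrAC.
rewrite invfM; set X := (_ * `|g l|); set Y := (eps m0 - delta m0) * `|g m0|.
set S := \sum_(_ <= _ < _) _; set P := \prod_(_ <= _ < _) _.
ring.
Qed.

Lemma prod_shift_delta_gt0 a b : (1 <= a)%N -> (b <= N)%N ->
  0 < \prod_(a <= p < b) (1 + delta p).
Proof.
move=> a1 bN; rewrite big_nat_cond; apply: prodr_gt0 => p /andP[/andP[ap pb] _].
by have [d1 _] := eps_delta (k:=p) ltac:(lia); apply: shift_delta_gt0.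
Qed.

Lemma bound_term_ge0 m0 l : (1 <= m0)%N -> (m0 <= l)%N -> (l < N)%N ->
  0 <= bound_term m0 l.
Proof.
move=> m01 m0l lN; apply: addr_ge0.
  apply: divr_ge0; last by apply/ltW/prod_shift_delta_gt0; lia.
  have [d1 [d0 e0]] := eps_delta (k:=l) ltac:(lia).
  by rewrite mulr_ge0 ?ratio_sqrB1_ge0.
rewrite big_nat_cond; apply: sumr_ge0 => m /andP[/andP[m0m ml] _].
apply: divr_ge0; last by apply/ltW/prod_shift_delta_gt0; lia.
have [d1 [d0 e0]] := eps_delta (k:=m) ltac:(lia).
by rewrite mulr_ge0 // subr_ge0 (le_trans d0 e0).
Qed.

Lemma bound_ge0 m0 : (1 <= m0)%N -> 0 <= bound m0.
Proof. by move=> m01; apply: bigmax_nat_ge0 => l ?; apply: bound_term_ge0; lia. Qed.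

Lemma le_bound m0 l : (1 <= m0)%N -> (m0 <= l < N)%N -> bound_term m0 l <= bound m0.
Proof.
move=> m01; apply: le_bigmax_nat => k ?.
by apply/ger0_real/bound_term_ge0; lia.
Qed.

Lemma bound_succ_le m : (1 <= m)%N -> bound m.+1 <= bound m.
Proof.
move=> m1; apply: bigmax_nat_le; first exact: bound_ge0.
move=> l ml; apply: le_trans (le_bound (l:=l) _ _); try lia.
have [d1 [d0 e0]] := eps_delta (k:=m) ltac:(lia).
have d1_gt0 := shift_delta_gt0 d1.
have t0 : 0 <= bound_term m.+1 l by apply: bound_term_ge0; lia.
have y0 : 0 <= (eps m - delta m) * `|g m|.
  by rewrite mulr_ge0 // subr_ge0 (le_trans d0 e0).
rewrite (@bound_term_step m l); last lia.
rewrite ler_pdivlMr //.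
apply: le_trans (_ : bound_term m.+1 l <= _); last by rewrite lerDl.
by apply: ler_piMr => //; apply: shift_delta_le1.
Qed.

Lemma bound_mono m m' : (1 <= m <= m')%N -> bound m' <= bound m.
Proof.
case/andP=> m1; elim: m' => [|m' IH] mm'; first lia.
have [->|mm'1] := eqVneq m m'.+1; first exact: lexx.
by apply: le_trans (bound_succ_le _) (IH _); lia.
Qed.

Lemma bound_first : (2 <= N)%N ->
  (((1 + eps 1) / (1 + delta 1)) ^+ 2 - 1) * `|g 1| <= bound 1.
Proof.
move=> N2; have := le_bound (m0:=1) (l:=1) isT ltac:(lia).
by rewrite /bound_term !big_geq // divr1 addr0.
Qed.

Lemma bound_rec : (2 <= N)%N ->
  bound 2 + (eps 1 - delta 1) * `|g 1| <= (1 + delta 1) * bound 1.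
Proof.
move=> N2; rewrite -lerBrDr.
have [d1 [d0 e0]] := eps_delta (k:=1) ltac:(lia).
have d1_gt0 := shift_delta_gt0 d1.
apply: bigmax_nat_le.
  rewrite subr_ge0; apply: le_trans (_ : _ <= (1 + delta 1) *
     ((((1 + eps 1) / (1 + delta 1)) ^+ 2 - 1) * `|g 1|)) _.
    by rewrite mulrA; apply: ler_wpM2r => //; apply: gap_le_ratio.
  by apply: ler_wpM2l; [exact: ltW | exact: bound_first].
move=> l l2; rewrite lerBrDr -ler_pdivrMl // mulrC -bound_term_step; last lia.
by apply: le_bound; lia.
Qed.
End Bound.

Section Schur.
Variable C : numFieldType.

Lemma aentE n (A : 'M[C]_n) (i j : 'I_n) : aent A i.+1 j.+1 = A i j.
Proof. by rewrite /aent /= !valK. Qed.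

Lemma aent_outl n (A : 'M[C]_n) i j : (n < i)%N -> aent A i j = 0.
Proof. by move=> ni; rewrite /aent insubN // -ltnS; case: i ni => //= i; lia. Qed.

Lemma aent_outr n (A : 'M[C]_n) i j : (n < j)%N -> aent A i j = 0.
Proof.
move=> nj; rewrite /aent; case: (insub i.-1) => [?|//].
by rewrite (@insubN _ (fun x : nat => (x < n)%N) _ j.-1) //; case: j nj => //= j; lia.
Qed.

Lemma gelS n (A : 'M[C]_n) k i j : (0 < k)%N -> (k < i)%N -> (k < j)%N ->
  gel A k.+1 i j = gel A k i j - gel A k i k * gel A k k j / gel A k k k.
Proof. by move=> k0 ki kj /=; rewrite k0 ki kj. Qed.

Definition schur n (A : 'M[C]_(1 + n)) : 'M[C]_n :=
  drsubmx A - (A ord0 ord0)^-1 *: (dlsubmx A *m ursubmx A).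

Lemma schurE n (A : 'M[C]_(1 + n)) (i j : 'I_n) :
  schur A i j = A (lift ord0 i) (lift ord0 j)
     - A (lift ord0 i) ord0 * A ord0 (lift ord0 j) / A ord0 ord0.
Proof.
rewrite /schur !mxE big_ord1 !mxE mulrC.
have -> : rshift 1 i = lift ord0 i by apply: val_inj.
have -> : rshift 1 j = lift ord0 j by apply: val_inj.
by have -> : lshift n (0 : 'I_1) = ord0 by apply: val_inj.
Qed.

Lemma gel2_schur n (A : 'M[C]_(1 + n)) i j : (0 < i)%N -> (0 < j)%N ->
  gel A 2 i.+1 j.+1 = aent (schur A) i j.
Proof.
case: i => [|i] // _; case: j => [|j] // _; rewrite gelS //=.
have [ni|iN] := leqP n i.
  by rewrite !(@aent_outl _ A i.+2) ?(@aent_outl _ (schur A) i.+1) ?mul0r ?subr0 //; lia.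
have [nj|jN] := leqP n j.
  rewrite !(@aent_outr _ A _ j.+2) ?(@aent_outr _ (schur A) _ j.+1) //; try lia.
  by rewrite mulr0 mul0r subr0.
rewrite (aentE (schur A) (Ordinal iN) (Ordinal jN)) schurE.
rewrite -[i.+2]/((lift ord0 (Ordinal iN) : nat).+1).
rewrite -[j.+2]/((lift ord0 (Ordinal jN) : nat).+1).
by rewrite -[1%N]/((@ord0 n : nat).+1) !aentE.
Qed.

Lemma gel_schur n (A : 'M[C]_(1 + n)) k i j : (0 < k)%N -> (k <= i)%N -> (k <= j)%N ->
  gel A k.+1 i.+1 j.+1 = gel (schur A) k i j.
Proof.
elim: k i j => [//|[|k] IH] i j _ ki kj; first exact: gel2_schur.
by rewrite gelS // [RHS]gelS // !IH //; lia.
Qed.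

Lemma det_schur n (A : 'M[C]_(1 + n)) : A ord0 ord0 != 0 ->
  \det A = A ord0 ord0 * \det (schur A).
Proof.
move=> A00.
have ulA : ulsubmx A = (A ord0 ord0)%:M.
  rewrite [LHS]mx11_scalar !mxE.
  by have -> : lshift n (0 : 'I_1) = ord0 by apply: val_inj.
have factor : A = block_mx 1%:M 0 ((A ord0 ord0)^-1 *: dlsubmx A) 1%:M *m
                  block_mx (ulsubmx A) (ursubmx A) 0 (schur A).
  rewrite mulmx_block !mul1mx !mul0mx !addr0 -{1}(submxK A); congr block_mx.
    by rewrite ulA -scalemxAl mul_mx_scalar scalerA mulVf // scale1r.
  by rewrite /schur -scalemxAl addrC subrK.
by rewrite {1}factor det_mulmx det_lblock det_ublock !det1 !mul1r ulA det_mx11 mxE.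
Qed.

Lemma ge_boundE n (A : 'M[C]_n) (eps delta : nat -> C) i j :
  ge_bound eps delta A i j = bound eps delta (fun l => gel A l l l) n (minn i j).
Proof. by []. Qed.

Lemma ge_bound_schur n (A : 'M[C]_(1 + n)) (eps delta : nat -> C) i j :
  (0 < i)%N -> (0 < j)%N ->
  ge_bound (fun k => eps k.+1) (fun k => delta k.+1) (schur A) i j =
  ge_bound eps delta A i.+1 j.+1.
Proof.
move=> i0 j0; rewrite /ge_bound minnSS big_add1; apply: eq_big_nat => l /andP[ml _].
rewrite -gel_schur; try lia.
rewrite big_add1; congr (_ / _ + _).
rewrite big_add1; apply: eq_big_nat => k /andP[mk _].
by rewrite -gel_schur; try lia; rewrite big_add1.
Qed.
End Schur.

Section Border.
Variables (C : numFieldType) (n : nat) (A : 'M[C]_(1 + n)) (BS : 'M[C]_n) (c : C).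

(* The matrix whose first row and column are those of A scaled by c, whose
   pivot is c^2 a_{11}, and whose Schur complement is BS (see schur_border). *)
Definition border : 'M[C]_(1 + n) :=
  block_mx ((c ^+ 2 * A ord0 ord0)%:M) (c *: ursubmx A) (c *: dlsubmx A)
    (BS + (A ord0 ord0)^-1 *: (dlsubmx A *m ursubmx A)).

Let ord0_lshift : ord0 = lshift n (0 : 'I_1). Proof. exact: val_inj. Qed.
Let lift_rshift (i : 'I_n) : lift ord0 i = rshift 1 i. Proof. exact: val_inj. Qed.

Lemma border00 : border ord0 ord0 = c ^+ 2 * A ord0 ord0.
Proof.
by rewrite /border [in LHS]ord0_lshift block_mxEul mxE eqxx mulr1n -ord0_lshift.
Qed.

Lemma border0l j : border ord0 (lift ord0 j) = c * A ord0 (lift ord0 j).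
Proof.
rewrite /border [in LHS]lift_rshift [in LHS]ord0_lshift block_mxEur !mxE.
by rewrite -ord0_lshift -lift_rshift.
Qed.

Lemma borderl0 i : border (lift ord0 i) ord0 = c * A (lift ord0 i) ord0.
Proof.
rewrite /border [in LHS]lift_rshift [in LHS]ord0_lshift block_mxEdl !mxE.
by rewrite -ord0_lshift -lift_rshift.
Qed.

Lemma borderll i j : border (lift ord0 i) (lift ord0 j) =
  BS i j + A (lift ord0 i) ord0 * A ord0 (lift ord0 j) / A ord0 ord0.
Proof.
rewrite /border [in LHS]lift_rshift [in LHS]lift_rshift block_mxEdr !mxE big_ord1 !mxE.
by rewrite -!lift_rshift -ord0_lshift mulrC.
Qed.

Lemma schur_border : c != 0 -> A ord0 ord0 != 0 -> schur border = BS.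
Proof.
move=> c0 a0; apply/matrixP => i j.
by rewrite schurE borderll borderl0 border0l border00; field; rewrite a0 c0.
Qed.

Lemma aent_border_row j : (1 < j)%N -> aent border 1 j = c * aent A 1 j.
Proof.
case: j => [|[|j]] // _; have [nj|jn] := leqP n j.
  by rewrite !(@aent_outr _ _ _ 1 j.+2) ?mulr0 //; lia.
rewrite -[j.+2]/((lift ord0 (Ordinal jn) : nat).+1) -[1%N]/((@ord0 n : nat).+1).
by rewrite !aentE border0l.
Qed.

Lemma aent_border_col i : (1 < i)%N -> aent border i 1 = c * aent A i 1.
Proof.
case: i => [|[|i]] // _; have [ni|iN] := leqP n i.
  by rewrite !(@aent_outl _ _ _ i.+2 1) ?mulr0 //; lia.
rewrite -[i.+2]/((lift ord0 (Ordinal iN) : nat).+1) -[1%N]/((@ord0 n : nat).+1).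
by rewrite !aentE borderl0.
Qed.
End Border.

Section ClassCP.
Variables (C : numClosedFieldType) (isR : bool).
Local Notation SD := (Sdom isR).

Lemma gel111 n (A : 'M[C]_(1 + n)) : gel A 1 1 1 = A ord0 ord0.
Proof. exact: (aentE A ord0 ord0). Qed.

(* For matrices of size at most 1 the growth condition is vacuous. *)
Lemma CP_small n (A : 'M[C]_n) eps delta : (n <= 1)%N ->
  CP eps SD A -> CP delta SD A.
Proof. by move=> n1 [AS Aunit Apiv _]; split => // k; lia. Qed.

Lemma CP_schur n (A : 'M[C]_(1 + n)) eps : (0 < n)%N ->
  CP eps SD A -> CP (fun k => eps k.+1) SD (schur A).
Proof.
move=> n0 [AS Aunit Apiv Agrowth].
have a0 : A ord0 ord0 != 0 by rewrite -gel111; apply: Apiv; lia.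
split.
- move=> i j; rewrite schurE; move: (AS (lift ord0 i) (lift ord0 j))
    (AS (lift ord0 i) ord0) (AS ord0 (lift ord0 j)) (AS ord0 ord0).
  by rewrite /Sdom; case: isR => // *; rewrite rpredB ?rpredM ?rpredV.
- by move: Aunit; rewrite !unitmxE (det_schur a0) unitrM => /andP[].
- by move=> k k1; rewrite -gel_schur; try lia; apply: Apiv; lia.
- move=> k i j k1 ki kj kk.
  rewrite -(@gel_schur _ n A k i j) -?(@gel_schur _ n A k k k); try lia.
  apply: Agrowth; try lia.
  by move: kk; apply: contra => /eqP [-> ->].
Qed.
End ClassCP.

(* lia restricted to the arithmetic hypotheses on nat: inside the section
   below, the many hypotheses about C make the preprocessing of lia slow. *)
Ltac lia_nat :=
  repeat match goal with
  | H : is_true (leq _ _) |- _ => revert H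
  | H : is_true (_ && _) |- _ => revert H
  | H : is_true (_ || _) |- _ => revert H
  | H : @eq nat _ _ |- _ => revert H
  end;
  repeat match goal with H : _ |- _ => clear H end;
  intros; lia.

(* The induction step: A of size 1 + n is CP for eps, and BS is a companion
   of schur A for the shifted parameters (hypotheses BS_close, BS_CP,
   BS_last, introduced where they are first needed). *)
Section Step.
Variables (C : numClosedFieldType) (isR : bool).
Local Notation SD := (Sdom isR).
Variables (eps delta : nat -> C) (n : nat) (A : 'M[C]_(1 + n)) (BS : 'M[C]_n).
Hypotheses (n_gt0 : (0 < n)%N) (A_CP : CP eps SD A).
Hypothesis eps_delta : forall k, (1 <= k <= n)%N ->
  -1 < delta k /\ delta k <= 0 /\ 0 <= eps k.

Local Notation a11 := (A ord0 ord0).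
Local Notation T := (bound eps delta (fun l => gel A l l l) n.+1).

Let eps_delta' : forall k, (1 <= k <= n.+1.-1)%N ->
  -1 < delta k /\ delta k <= 0 /\ 0 <= eps k := eps_delta.
Let eps_delta1 : -1 < delta 1 /\ delta 1 <= 0 /\ 0 <= eps 1.
Proof. by apply: eps_delta; lia_nat. Qed.

Lemma pivot1_neq0 : a11 != 0.
Proof. by case: A_CP => _ _ Apiv _; rewrite -gel111; apply: Apiv; lia_nat. Qed.

Let a11_gt0 : 0 < `|a11|. Proof. by rewrite normr_gt0 pivot1_neq0. Qed.
Let T1_ge0 : 0 <= T 1. Proof. exact: bound_ge0. Qed.

(* The scaling factor c of the first row and column: c^2 |a11| = |a11| + T 1. *)
Definition scale : C := sqrtC (1 + T 1 / `|a11|).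

Lemma scale_sq : scale ^+ 2 = 1 + T 1 / `|a11|.
Proof. exact: sqrtCK. Qed.

Lemma scale_sqB1 : (scale ^+ 2 - 1) * `|a11| = T 1.
Proof. by rewrite scale_sq addrC addKr divfK // gt_eqF. Qed.

Let scale_ge0 : 0 <= scale.
Proof. by rewrite sqrtC_ge0 addr_ge0 ?divr_ge0 // ltW. Qed.

Lemma scale_ge_ratio : (1 + eps 1) / (1 + delta 1) <= scale.
Proof.
have [d1 [d0 e0]] := eps_delta1.
have r1 := ratio_ge1 d1 d0 e0.
rewrite -(@ler_pXn2r _ 2%N) ?nnegrE ?(le_trans ler01 r1) //.
rewrite scale_sq -lerBlDl ler_pdivlMr //.
by have := bound_first (fun l => gel A l l l) eps_delta'; rewrite gel111; apply; lia_nat.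
Qed.

Lemma scale_ge1 : 1 <= scale.
Proof.
by have [d1 [d0 e0]] := eps_delta1; exact: le_trans (ratio_ge1 d1 d0 e0) scale_ge_ratio.
Qed.

Let scale_neq0 : scale != 0. Proof. by rewrite gt_eqF // (lt_le_trans ltr01 scale_ge1). Qed.

Lemma scale_sq_norm : scale ^+ 2 * `|a11| = `|a11| + T 1.
Proof. by rewrite -scale_sqB1 mulrBl mul1r addrC subrK. Qed.

Lemma scaled_small x : `|x| <= (1 + eps 1) * `|a11| ->
  `|scale * x| <= (1 + delta 1) * (`|a11| + T 1).
Proof.
move=> x_small; have [d1 [d0 e0]] := eps_delta1.
have e1_le : 1 + eps 1 <= scale * (1 + delta 1).
  by rewrite -ler_pdivrMr ?shift_delta_gt0 ?scale_ge_ratio.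
rewrite normrM ger0_norm // -scale_sq_norm.
have -> : (1 + delta 1) * (scale ^+ 2 * `|a11|) =
          scale * (scale * (1 + delta 1) * `|a11|) by ring.
by apply/ler_wpM2l/(le_trans x_small)/ler_wpM2r.
Qed.

Lemma scaled_close x : `|x| <= (1 + eps 1) * `|a11| -> `|scale * x - x| <= T 1.
Proof.
move=> x_small; have [d1 [d0 e0]] := eps_delta1.
have e1_le : 1 + eps 1 <= scale + 1.
  apply: le_trans (ratio_ge d1 d0 e0) (le_trans scale_ge_ratio _).
  by rewrite lerDl.
have c1_ge0 : 0 <= scale - 1 by rewrite subr_ge0 scale_ge1.
rewrite -{2}[x]mul1r -mulrBl normrM ger0_norm // -scale_sqB1.
have -> : scale ^+ 2 - 1 = (scale - 1) * (scale + 1) by ring.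
by rewrite -mulrA; apply/ler_wpM2l/(le_trans x_small)/ler_wpM2r.
Qed.

Definition ext : 'M[C]_(1 + n) := border A BS scale.

Lemma gel_ext_schur k i j : (0 < k)%N -> (k <= i)%N -> (k <= j)%N ->
  gel ext k.+1 i.+1 j.+1 = gel BS k i j.
Proof. by move=> *; rewrite gel_schur // schur_border ?pivot1_neq0. Qed.

Lemma ext_pivot1 : gel ext 1 1 1 = scale ^+ 2 * a11.
Proof. by rewrite gel111 border00. Qed.

Lemma ext_row1 j : (1 < j)%N -> gel ext 1 1 j = scale * gel A 1 1 j.
Proof. exact: aent_border_row. Qed.

Lemma ext_col1 i : (1 < i)%N -> gel ext 1 i 1 = scale * gel A 1 i 1.
Proof. exact: aent_border_col. Qed.

Lemma A_step1_small i j : (1 <= i <= n.+1)%N -> (1 <= j <= n.+1)%N ->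
  (i, j) != (1, 1)%N -> `|gel A 1 i j| <= (1 + eps 1) * `|a11|.
Proof.
case: A_CP => _ _ _ Agrowth iN jN ij; rewrite -gel111.
by apply: (Agrowth 1%N i j) => //; lia_nat.
Qed.

(* Scaling the first row and column by c and the pivot by c^2 leaves the
   eliminated products unchanged, so the interior discrepancy at step 1 is
   the discrepancy between BS and schur A. *)
Lemma ext_step1_diff i j : (0 < i)%N -> (0 < j)%N ->
  gel ext 1 i.+1 j.+1 - gel A 1 i.+1 j.+1 = gel BS 1 i j - gel (schur A) 1 i j.
Proof.
move=> i0 j0; rewrite -gel_ext_schur // -gel_schur //.
rewrite (gelS ext (k:=1)) // (gelS A (k:=1)) //.
rewrite ext_pivot1 ext_row1 // ext_col1 // gel111.
by field; rewrite scale_neq0 pivot1_neq0.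
Qed.

Hypothesis BS_close : forall k i j, (1 <= k <= n)%N -> (k <= i <= n)%N ->
  (k <= j <= n)%N ->
  `|gel BS k i j - gel (schur A) k i j| <=
    ge_bound (fun k => eps k.+1) (fun k => delta k.+1) (schur A) i j.

Lemma ext_close_interior k i j : (1 <= k)%N -> (k <= i <= n.+1)%N ->
  (k <= j <= n.+1)%N -> (1 < i)%N -> (1 < j)%N ->
  `|gel ext k i j - gel A k i j| <= ge_bound eps delta A i j.
Proof.
case: i j => [|i] [|j] // k1 ki kj i1 j1; rewrite -ge_bound_schur; try lia_nat.
case: k k1 ki kj => [|[|k]] // _ ki kj.
  by rewrite ext_step1_diff //; apply: (BS_close (k:=1)); lia_nat.
by rewrite gel_ext_schur ?gel_schur; try lia_nat; apply: (BS_close (k:=k.+1)); lia_nat.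
Qed.

Lemma ext_close k i j : (1 <= k <= n.+1)%N -> (k <= i <= n.+1)%N ->
  (k <= j <= n.+1)%N ->
  `|gel ext k i j - gel A k i j| <= ge_bound eps delta A i j.
Proof.
move=> kN ki kj; have [i1|i1] := leqP i 1; have [j1|j1] := leqP j 1.
- have [-> [-> ->]] : (i = 1 /\ j = 1 /\ k = 1)%N by lia_nat.
  rewrite ext_pivot1 gel111 -{2}[a11]mul1r -mulrBl normrM ger0_norm ?scale_sqB1 //.
  by rewrite subr_ge0 scale_sq lerDl divr_ge0 // ltW.
- have [-> ->] : (i = 1 /\ k = 1)%N by lia_nat.
  rewrite ge_boundE (_ : minn 1 j = 1)%N; last lia_nat.
  rewrite ext_row1 //; apply/scaled_close/A_step1_small; try lia_nat.
  by apply/eqP => -[]; lia_nat.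
- have [-> ->] : (j = 1 /\ k = 1)%N by lia_nat.
  rewrite ge_boundE (_ : minn i 1 = 1)%N; last lia_nat.
  rewrite ext_col1 //; apply/scaled_close/A_step1_small; try lia_nat.
  by apply/eqP => -[]; lia_nat.
- by apply: ext_close_interior; lia_nat.
Qed.

(* Step 1 of the growth condition for the new matrix, with parameter delta_1:
   border entries by scaled_small, interior entries by the recursion of the
   bound. *)
Lemma ext_growth1 i j : (1 <= i <= n.+1)%N -> (1 <= j <= n.+1)%N ->
  (i, j) != (1, 1)%N -> `|gel ext 1 i j| <= (1 + delta 1) * `|gel ext 1 1 1|.
Proof.
move=> iN jN ij; have ij' := ij; rewrite xpair_eqE negb_and in ij'.
rewrite ext_pivot1 normrM ger0_norm ?exprn_ge0 // scale_sq_norm.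
have [i1|i1] := leqP i 1.
  have i_eq1 : i = 1%N by lia_nat.
  subst i; rewrite ext_row1 ?scaled_small ?A_step1_small //; lia_nat.
have [j1|j1] := leqP j 1.
  have j_eq1 : j = 1%N by lia_nat.
  subst j; rewrite ext_col1 ?scaled_small ?A_step1_small //; lia_nat.
have [d1 _] := eps_delta1.
have close_T2 : `|gel ext 1 i j - gel A 1 i j| <= T 2.
  apply: le_trans (ext_close_interior _ _ _ _ _) _ => //; try lia_nat.
  by rewrite ge_boundE; apply: (bound_mono (fun l => gel A l l l) eps_delta'); lia_nat.
have rec := bound_rec (fun l => gel A l l l) eps_delta'; rewrite gel111 in rec.
rewrite -(subrK (gel A 1 i j) (gel ext 1 i j)).
apply: le_trans (ler_normD _ _) (le_trans (lerD close_T2 (A_step1_small iN jN ij)) _).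
have -> : T 2 + (1 + eps 1) * `|a11| =
  (1 + delta 1) * `|a11| + (T 2 + (eps 1 - delta 1) * `|a11|) by ring.
by rewrite mulrDr lerD2l rec //; lia_nat.
Qed.

Hypothesis BS_CP : CP (fun k => delta k.+1) SD BS.

Lemma ext_in_S i j : ext i j \in SD.
Proof.
case: A_CP BS_CP => AS _ _ _ [BSS _ _ _]; move: AS BSS; rewrite /Sdom.
case: isR => // AS BSS; have c_real : scale \is Num.real by apply: ger0_real.
case: (unliftP ord0 i) => [i'|] ->; case: (unliftP ord0 j) => [j'|] ->.
- by rewrite borderll rpredD // rpredM // ?rpredM // rpredV.
- by rewrite borderl0 rpredM.
- by rewrite border0l rpredM.
- by rewrite border00 rpredM // rpredX.
Qed.

Lemma ext_CP : CP delta SD ext.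
Proof.
have ext00 : ext ord0 ord0 != 0 by rewrite border00 mulf_neq0 ?expf_neq0 ?pivot1_neq0.
case: BS_CP => _ BSunit BSpiv BSgrowth; split.
- exact: ext_in_S.
- rewrite unitmxE (det_schur ext00) schur_border ?pivot1_neq0 //.
  by rewrite unitrM unitfE ext00 -unitmxE.
- case=> [|[|k]] // kN; first by rewrite gel111.
  by rewrite gel_ext_schur ?BSpiv //; lia_nat.
- case=> [|[|k]] // i j kN ki kj kk; first exact: ext_growth1.
  case: i j ki kj kk => [|i] [|j] // ki kj kk; rewrite !gel_ext_schur //; try lia_nat.
  by apply: BSgrowth; try lia_nat; move: kk; apply: contra => /eqP [-> ->].
Qed.
Hypothesis BS_last : forall k, (1 <= k <= n)%N -> gel BS k n n = gel (schur A) k n n.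

Lemma ext_last k : (1 <= k <= n.+1)%N -> gel ext k n.+1 n.+1 = gel A k n.+1 n.+1.
Proof.
case: k => [|[|k]] // kN.
  by apply/eqP; rewrite -subr_eq0 ext_step1_diff // BS_last ?subrr //= n_gt0.
have kn : (k < n)%N by rewrite -ltnS; case/andP: kN.
by rewrite gel_ext_schur ?gel_schur ?BS_last ?kn.
Qed.
End Step.

Lemma CP_tighten (C : numClosedFieldType) (isR : bool) n :
  forall eps delta : nat -> C,
  (forall k, (1 <= k <= n.-1)%N -> -1 < delta k /\ delta k <= 0 /\ 0 <= eps k) ->
  forall A : 'M[C]_n, CP eps (Sdom isR) A ->
  exists B : 'M[C]_n,
    CP delta (Sdom isR) B /\
    (forall k, (1 <= k <= n)%N -> gel B k n n = gel A k n n) /\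
    (forall k i j, (1 <= k <= n)%N -> (k <= i <= n)%N -> (k <= j <= n)%N ->
       `|gel B k i j - gel A k i j| <= ge_bound eps delta A i j).
Proof.
elim: n => [|n IH] eps delta eps_delta A A_CP.
  by exists A; split; [exact: CP_small A_CP | split => [k|k i j]; lia].
have [n0|n_gt0] := posnP n.
  subst n; exists A; split; first exact: CP_small A_CP.
  split=> // k i j k1 ki kj; rewrite subrr normr0 ge_boundE.
  by apply: (bound_ge0 _ eps_delta); lia.
have eps_delta_schur : forall k, (1 <= k <= n.-1)%N ->
    -1 < delta k.+1 /\ delta k.+1 <= 0 /\ 0 <= eps k.+1.
  by move=> k k1; apply: eps_delta; lia.
have [BS [BS_CP [BS_last BS_close]]] :=
  IH _ _ eps_delta_schur _ (CP_schur n_gt0 A_CP).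
exists (ext eps delta A BS); split.
  exact: (ext_CP n_gt0 A_CP eps_delta BS_close BS_CP).
split; first exact: (ext_last n_gt0 A_CP eps_delta BS_last).
exact: (ext_close n_gt0 A_CP eps_delta BS_close).
Qed.

Theorem mainTheorem3 (R : realType) (isR : bool) (n : nat)
    (eps delta : nat -> R[i]) :
  (forall k, (1 <= k <= n.-1)%N -> -1 < delta k /\ delta k <= 0 /\ 0 <= eps k) ->
  forall A : 'M[R[i]]_n, CP eps (Sdom isR) A ->
  exists B : 'M[R[i]]_n,
    CP delta (Sdom isR) B /\
    (forall k, (1 <= k <= n)%N -> gel B k n n = gel A k n n) /\
    (forall k i j, (1 <= k <= n)%N -> (k <= i <= n)%N -> (k <= j <= n)%N ->
       `|gel B k i j - gel A k i j| <= ge_bound eps delta A i j).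
Proof. exact: CP_tighten. Qed.
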